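(* Let $q\in\mathbb{C}$, $q\neq0,1$, not a root of unity, and let $(K,\sigma,\theta^{*})$ be a (commutative) qsi field over $\mathbb{C}$. Then the linear qsi system \[ \sigma Y=\begin{bmatrix} q&0\\0&1\end{bmatrix}Y,\qquad \theta^{(1)}Y=\begin{bmatrix}0&1\\0&0\end{bmatrix}Y \] has no qsi Picard–Vessiot extension $L/K$; that is, there is no (commutative) qsi field extension $(L,\sigma,\theta^{*})$ of $K$ together with a solution $Y\in\mathrm{GL}_2(L)$ of the system such that $L$ is generated as a field over $K$ by the entries of $Y$ and the field of constants of $L$ coincides with the field of constants of $K$.
   Context: Fix $q\in\mathbb{C}$, $q\neq0,1$, not a root of unity; put $[m]_q=1+q+\dots+q^{m-1}$ and $[m]_q!=[1]_q\cdots[m]_q$. A qsi algebra over $\mathbb{C}$ is a triple $(A,\sigma,\theta^{*})$ with $A$ a $\mathbb{C}$-algebra, $\sigma$ a $\mathbb{C}$-algebra automorphism of $A$, $\theta^{*}=\{\theta^{(m)}\}_{m\in\mathbb{N}}$ $\mathbb{C}$-linear maps with $\theta^{(0)}=\mathrm{Id}$, $\theta^{(m)}=\frac{1}{[m]_q!}(\theta^{(1)})^m$, $\theta^{(1)}(ab)=\theta^{(1)}(a)b+\sigma(a)\theta^{(1)}(b)$ and $\theta^{(1)}\sigma=q\sigma\theta^{(1)}$. A qsi field is a qsi algebra that is a commutative field; a qsi field extension $L/K$ is an inclusion of qsi fields compatible with $\sigma$ and all $\theta^{(m)}$. The constants of a qsi algebra $A$ are the elements $a$ with $\sigma(a)=a$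 and $\theta^{(m)}(a)=0$ for all $m\ge1$. *)

From HB Require Import structures.
From mathcomp Require Import all_boot all_order all_algebra.
Set Implicit Arguments. Unset Strict Implicit. Unset Printing Implicit Defensive.
Import Order.TTheory GRing.Theory Num.Theory.
Local Open Scope ring_scope.

Definition qint (C : fieldType) (q : C) (m : nat) : C := \sum_(i < m) q ^+ i.
Definition qfact (C : fieldType) (q : C) (m : nat) : C :=
  \prod_(i < m) qint q i.+1.

Definition not_root_of_unity (C : fieldType) (q : C) : Prop :=
  forall n : nat, (0 < n)%N -> q ^+ n <> 1.

(* (K, sigma, theta^{*}) is a qsi field over C, the C-algebra structure of the
   field K being given by the ring morphism iota : C -> K. *)
Definition is_qsi_field (C : fieldType) (q : C) (K : fieldType)
    (iota : {rmorphism C -> K}) (sigma : K -> K) (theta : nat -> K -> K) : Prop :=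
      (forall x y, sigma (x + y) = sigma x + sigma y) /\
      (forall x y, sigma (x * y) = sigma x * sigma y) /\
      sigma 1 = 1 /\
      (forall c, sigma (iota c) = iota c) /\
      bijective sigma /\
      (forall m x y, theta m (x + y) = theta m x + theta m y) /\
      (forall m c x, theta m (iota c * x) = iota c * theta m x) /\
      (forall x, theta 0%N x = x) /\
      (forall m x, theta m x = iota (qfact q m)^-1 * iter m (theta 1%N) x) /\
      (forall a b, theta 1%N (a * b) = theta 1%N a * b + sigma a * theta 1%N b) /\
      (forall a, theta 1%N (sigma a) = iota q * sigma (theta 1%N a)).

Definition is_qsi_const (K : fieldType) (sigma : K -> K) (theta : nat -> K -> K)
    (a : K) : Prop :=
  sigma a = a /\ (forall m : nat, (1 <= m)%N -> theta m a = 0).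

Definition is_subfield (L : fieldType) (S : L -> Prop) : Prop :=
  S 0 /\ S 1 /\ (forall x y, S x -> S y -> S (x - y)) /\
      (forall x y, S x -> S y -> S (x * y)) /\ (forall x, S x -> S x^-1).

Definition sigma_mat (L : fieldType) (q : L) : 'M[L]_2 :=
  diag_mx (\row_(i < 2) if i == ord0 then q else 1).
Definition theta_mat (L : fieldType) : 'M[L]_2 := delta_mx ord0 (@ord_max 1).

(* The first row (a, b) of a solution satisfies sigma a = q a, sigma b = q b,
   theta a = Y 1 0 and theta b = Y 1 1.  Expanding theta (a b) = theta (b a)
   with the twisted Leibniz rule gives (q - 1) det Y = 0, so no solution in a
   commutative qsi field is invertible, whatever the constants of L are. *)

From HB Require Import structures.
From mathcomp Require Import all_boot all_order all_algebra.
From mathcomp Require Import ring.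
Import GRing.Theory.
Local Open Scope ring_scope.

Lemma det_mx2 {R : comPzRingType} (A : 'M[R]_2) :
  \det A = A 0 0 * A 1 1 - A 0 1 * A 1 0.
Proof.
rewrite (expand_det_row _ ord0) !big_ord_recl big_ord0 /cofactor !det_mx11 !mxE /=.
rewrite expr0 expr1 mul1r mulN1r addr0 mulrN.
congr (_ * A _ _ - _ * A _ _).
all: try congr (A _ _); exact: val_inj.
Qed.

Lemma twisted_leibniz_wronskian {R : comPzRingType} {sigma theta : R -> R}
    {c a b : R} :
    (forall x y, theta (x * y) = theta x * y + sigma x * theta y) ->
    sigma a = c * a -> sigma b = c * b ->
  (c - 1) * (a * theta b - b * theta a) = 0.
Proof.
move=> leibniz sa sb.
have := leibniz b a; rewrite mulrC leibniz sa sb => /eqP.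
by rewrite -subr_eq0 => /eqP eq0; rewrite -[RHS]eq0; ring.
Qed.

Section FirstRow.

Context {L : fieldType} {sigma theta : L -> L} {q : L} {Y : 'M[L]_2}.

Lemma sigma_sol_row0 j :
  map_mx sigma Y = sigma_mat q *m Y -> sigma (Y 0 j) = q * Y 0 j.
Proof.
by move=> /(congr1 (fun M : 'M[L]_2 => M 0 j)); rewrite /sigma_mat mul_diag_mx !mxE.
Qed.

Lemma theta_sol_row0 j :
  map_mx theta Y = theta_mat L *m Y -> theta (Y 0 j) = Y 1 j.
Proof.
move=> /(congr1 (fun M : 'M[L]_2 => M 0 j)); rewrite /theta_mat !mxE => ->.
rewrite !big_ord_recl big_ord0 !mxE /= mul0r add0r mul1r addr0.
by congr (Y _ _); apply: val_inj.
Qed.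

End FirstRow.

Theorem corollary2 (C : fieldType) (q : C)
    (hq0 : q != 0) (hq1 : q != 1) (hq : not_root_of_unity q)
    (K : fieldType) (iotaK : {rmorphism C -> K})
    (sigmaK : K -> K) (thetaK : nat -> K -> K)
    (hK : is_qsi_field q iotaK sigmaK thetaK) :
  ~ exists (L : fieldType) (iotaL : {rmorphism C -> L})
      (sigmaL : L -> L) (thetaL : nat -> L -> L)
      (phi : {rmorphism K -> L}) (Y : 'M[L]_2),
      is_qsi_field q iotaL sigmaL thetaL /\
          (forall c, phi (iotaK c) = iotaL c) /\
          (forall x, sigmaL (phi x) = phi (sigmaK x)) /\
          (forall m x, thetaL m (phi x) = phi (thetaK m x)) /\
          Y \in unitmx /\
          map_mx sigmaL Y = sigma_mat (iotaL q) *m Y /\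
          map_mx (thetaL 1%N) Y = theta_mat L *m Y /\
          (forall S : L -> Prop, is_subfield S ->
             (forall x, S (phi x)) -> (forall i j, S (Y i j)) ->
             forall y, S y) /\
          (forall y, is_qsi_const sigmaL thetaL y ->
             exists2 x, is_qsi_const sigmaK thetaK x & phi x = y).
Proof.
move=> [L [iotaL [sigmaL [thetaL [phi [Y]]]]]].
move=> [[_ [_ [_ [_ [_ [_ [_ [_ [_ [leibniz _]]]]]]]]]] [_ [_ [_ [unitY [solS [solT _]]]]]]].
have := twisted_leibniz_wronskian leibniz
  (sigma_sol_row0 0 solS) (sigma_sol_row0 1 solS).
rewrite !(theta_sol_row0 _ solT) -(det_mx2 Y) => /eqP.
rewrite mulf_eq0 subr_eq0 fmorph_eq1 (negbTE hq1) orFb.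
by move: unitY; rewrite unitmxE unitfE => /negbTE ->.
Qed.
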